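(* Fix an algorithm $\mathscr{A}$ run for $T$ rounds on a two-stage causal MDP instance, and an intermediate state $i$ with $m_i\ge1$. Let $Tr_i$ be the expected number of visits to state $i$, let $N_{(a,i)}$ be the expected number of times $\mathscr{A}$ explicitly performs $a$ at state $i$, let $\mathcal{J}_i=\{a\in\mathcal{I}_{m_i}:N_{(a,i)}\le 2Tr_i/m_i\}$, and let $T_{(a,i)}$ be the (random) number of rounds in which intervention $a$ is observed at state $i$. Then for every $a\in\mathcal{J}_i$, $$\mathbb{E}[T_{(a,i)}]\le\frac{3Tr_i}{m_i}.$$
   Context: Two-stage causal MDP: start state $0$, intermediate states $[k]$; at each state $i$ there are independent Bernoulli variables $X^i_1,\dots,X^i_n$ with $q^i_j=\mathbb{P}\{X^i_j=1\}$, drawn afresh each round independently of which state is visited; atomic interventions $\mathcal{I}_i=\{do()\}\cup\{do(X^i_j=0),do(X^i_j=1):j\in[n]\}$, where $do(X^i_j=x)$ sets $X^i_j=x$ and leaves the other variables random. In each of $T$ rounds the algorithm performs an intervention at state $0$, transitions randomly to some intermediate state $i$, and performs one intervention in $\mathcal{I}_i$, observing all $X^i_j$. Intervention $a=do(X^i_j=1)$ is said to be observed at state $i$ in a round if state $i$ is visited and $X^i_j=1$ in that round (whether because $a$ was performed or because the variable took that value naturally). Sorting $q^i_{(1)}\le\dots\le q^i_{(n)}$, $m_i=\max\{j:q^i_{(j)}<1/j\}$ and $\mathcal{I}_{m_i}=\{do(X^i_{(j)}=1):q^i_{(j)}<1/j\}$. Expectations are over the randomness of the instance and the algorithm. *)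

From HB Require Import structures.
From mathcomp Require Import all_boot all_order all_algebra all_fingroup.
Set Implicit Arguments. Unset Strict Implicit. Unset Printing Implicit Defensive.
Import Order.TTheory GRing.Theory Num.Theory.
Local Open Scope ring_scope.

(* Atomic interventions at an intermediate state:
   None = do(),  Some (j, x) = do(X_j = x). *)
Notation interv n := (option ('I_n * bool)).

(* One round: (intervention at state 0, observation at state 0,
   intermediate state visited, intervention there, observed values X^i). *)
Notation rec A0 O0 k n :=
  (A0 * O0 * 'I_k * interv n * {ffun 'I_n -> bool})%type.

Section Model.
Variables (R : realFieldType) (A0 O0 : finType) (k n : nat).

Definition rec_a0 (r : rec A0 O0 k n) : A0 := r.1.1.1.1.
Definition rec_o0 (r : rec A0 O0 k n) : O0 := r.1.1.1.2.
Definition rec_st (r : rec A0 O0 k n) : 'I_k := r.1.1.2.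
Definition rec_act (r : rec A0 O0 k n) : interv n := r.1.2.
Definition rec_X (r : rec A0 O0 k n) : {ffun 'I_n -> bool} := r.2.

Definition bp (p : R) (b : bool) : R := if b then p else 1 - p.

Definition var_factor (qi : 'I_n -> R) (a : interv n) (X : {ffun 'I_n -> bool})
  (j : 'I_n) : R :=
  match a with
  | Some (j', x) => if j' == j then (X j == x)%:R else bp (qi j) (X j)
  | None => bp (qi j) (X j)
  end.

Definition bern (qi : 'I_n -> R) (a : interv n) (X : {ffun 'I_n -> bool}) : R :=
  \prod_(j < n) var_factor qi a X j.

Definition valid_q (q : 'I_k -> 'I_n -> R) : Prop :=
  forall i j, 0 <= q i j <= 1.

(* trans a0 o0 i = joint probability of observation o0 at state 0 and
   transition to intermediate state i, when a0 is performed at state 0 *)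
Definition valid_trans (trans : A0 -> O0 -> 'I_k -> R) : Prop :=
  forall a0, (forall o0 i, 0 <= trans a0 o0 i) /\
             \sum_(p : O0 * 'I_k) trans a0 p.1 p.2 = 1.

Definition valid_pol0 (pol0 : seq (rec A0 O0 k n) -> A0 -> R) : Prop :=
  forall h, (forall a0, 0 <= pol0 h a0) /\ \sum_(a0 : A0) pol0 h a0 = 1.

Definition valid_pol1
  (pol1 : seq (rec A0 O0 k n) -> A0 -> O0 -> 'I_k -> interv n -> R) : Prop :=
  forall h a0 o0 i, (forall a, 0 <= pol1 h a0 o0 i a) /\
                    \sum_(a : interv n) pol1 h a0 o0 i a = 1.

Variable T : nat.

Definition traj_weight (pol0 : seq (rec A0 O0 k n) -> A0 -> R)
  (trans : A0 -> O0 -> 'I_k -> R)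
  (pol1 : seq (rec A0 O0 k n) -> A0 -> O0 -> 'I_k -> interv n -> R)
  (q : 'I_k -> 'I_n -> R) (tr : T.-tuple (rec A0 O0 k n)) : R :=
  \prod_(t < T)
    (pol0 (take t tr) (rec_a0 (tnth tr t)) *
     trans (rec_a0 (tnth tr t)) (rec_o0 (tnth tr t)) (rec_st (tnth tr t)) *
     pol1 (take t tr) (rec_a0 (tnth tr t)) (rec_o0 (tnth tr t))
          (rec_st (tnth tr t)) (rec_act (tnth tr t)) *
     bern (q (rec_st (tnth tr t))) (rec_act (tnth tr t)) (rec_X (tnth tr t))).

Definition expect pol0 trans pol1 q (f : T.-tuple (rec A0 O0 k n) -> nat) : R :=
  \sum_(tr : T.-tuple (rec A0 O0 k n))
     traj_weight pol0 trans pol1 q tr * (f tr)%:R.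

Definition visits (i : 'I_k) (tr : T.-tuple (rec A0 O0 k n)) : nat :=
  count (fun r => rec_st r == i) tr.

Definition performs (i : 'I_k) (a : interv n) (tr : T.-tuple (rec A0 O0 k n)) : nat :=
  count (fun r => (rec_st r == i) && (rec_act r == a)) tr.

(* number of rounds in which do(X^i_j = 1) is observed at state i *)
Definition observed1 (i : 'I_k) (j : 'I_n) (tr : T.-tuple (rec A0 O0 k n)) : nat :=
  count (fun r => (rec_st r == i) && rec_X r j) tr.

End Model.

Section Sorting.
Variables (R : realFieldType) (n : nat).

(* s sorts qi increasingly: q_(j+1) = qi (s j)  (0-indexed position j) *)
Definition sorted_by (qi : 'I_n -> R) (s : {perm 'I_n}) : Prop :=
  forall j1 j2 : 'I_n, (j1 <= j2)%N -> qi (s j1) <= qi (s j2).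

(* m_i = max { j : q_(j) < 1/j } (1-indexed; 0 if empty) *)
Definition m_of (qi : 'I_n -> R) (s : {perm 'I_n}) : nat :=
  \max_(j < n | qi (s j) < (j.+1%:R)^-1) j.+1.

Definition in_Im (qi : 'I_n -> R) (s : {perm 'I_n}) (a : interv n) : Prop :=
  exists j : 'I_n, a = Some (s j, true) /\ qi (s j) < (j.+1%:R)^-1.

End Sorting.

Arguments expect {R A0 O0 k n} T pol0 trans pol1 q f.

(* In every round, conditionally on the history, the algorithm visits state i
   and sees X^i_j = 1 with probability at most P(visit i and perform
   do(X^i_j = 1)) + q_ij P(visit i): the variable is either forced to 1 or
   drawn from its Bernoulli(q_ij) law.  Summing over the rounds, by induction
   on the horizon through the first-round decomposition of the trajectory law,
   gives E[T_(a,i)] <= N_(a,i) + q_ij Tr_i.  If a = do(X_(l) = 1) lies in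
   I_(m_i) then l <= m_i, so sortedness gives q_(l) <= q_(m_i) < 1/m_i, and
   the hypothesis on N_(a,i) yields 2 Tr_i/m_i + Tr_i/m_i. *)

From HB Require Import structures.
From mathcomp Require Import all_boot all_order all_algebra all_fingroup.
From mathcomp Require Import ring.
Import Order.TTheory GRing.Theory Num.Theory.
Local Open Scope ring_scope.
Set Implicit Arguments. Unset Strict Implicit. Unset Printing Implicit Defensive.

Lemma sum_pair (V : nmodType) (I J : finType) (F : I * J -> V) :
  \sum_p F p = \sum_i \sum_j F (i, j).
Proof. by rewrite pair_bigA; apply: eq_bigr => -[]. Qed.

Lemma sum_tuple_cons (V : nmodType) (T : finType) m (F : m.+1.-tuple T -> V) :
  \sum_t F t = \sum_x \sum_(t : m.-tuple T) F (cons_tuple x t).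
Proof.
rewrite pair_bigA (reindex (fun p : T * m.-tuple T => cons_tuple p.1 p.2)) //=.
exists (fun t => (thead t, behead_tuple t)) => [[x t] _ | t _] /=.
  by congr (_, _); apply: val_inj.
by apply: val_inj; case: t => -[].
Qed.

Section Bernoulli.
Variables (R : realFieldType) (n : nat) (qi : 'I_n -> R).

(* var_factor only reads X j, so a constant X isolates the law of X_j. *)
Definition var_law (a : interv n) (j : 'I_n) (b : bool) : R :=
  var_factor qi a [ffun=> b] j.

Lemma bernE a X : bern qi a X = \prod_j var_law a j (X j).
Proof.
by apply: eq_bigr => j _; rewrite /var_law /var_factor; case: a => [[]|]; rewrite ffunE.
Qed.

Lemma var_law_ge0 a j b : 0 <= qi j <= 1 -> 0 <= var_law a j b.
Proof.
move=> /andP[q0 q1]; rewrite /var_law /var_factor /bp ffunE.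
by case: a => [[j' x]|]; [case: (j' == j)|]; case: b; rewrite ?ler0n ?subr_ge0.
Qed.

Lemma var_law_sum a j : var_law a j true + var_law a j false = 1.
Proof.
rewrite /var_law /var_factor /bp !ffunE.
by case: a => [[j' []]|]; [case: (j' == j)..|]; rewrite /= ?addr0 ?add0r ?subrKC.
Qed.

Lemma var_law_true_le a j :
  0 <= qi j -> var_law a j true <= (a == Some (j, true))%:R + qi j.
Proof.
move=> q0; rewrite /var_law /var_factor /bp ffunE.
case: a => [[j' x]|]; last by rewrite add0r.
case: (eqVneq j' j) => [->|_]; last by rewrite lerDr.
by apply: ler_wpDr => //; case: x; rewrite ?eqxx ?ler0n.
Qed.

Lemma bern_ge0 a X : (forall j, 0 <= qi j <= 1) -> 0 <= bern qi a X.
Proof. by move=> q01; rewrite bernE; apply: prodr_ge0 => j _; apply: var_law_ge0. Qed.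

Lemma bern_sum a : \sum_X bern qi a X = 1.
Proof.
under eq_bigr do rewrite bernE.
rewrite -(bigA_distr_bigA (fun j b => var_law a j b)).
by apply: big1 => j _; rewrite big_bool /= var_law_sum.
Qed.

Lemma bern_marginal a j : \sum_X bern qi a X * (X j)%:R = var_law a j true.
Proof.
pose F j' (b : bool) := if j' == j then b%:R * var_law a j' b else var_law a j' b.
transitivity (\sum_(X : {ffun 'I_n -> bool}) \prod_j' F j' (X j')).
  apply: eq_bigr => X _; rewrite bernE (bigD1 j) // [RHS](bigD1 j) //= /F eqxx.
  rewrite mulrAC [_ * (X j)%:R]mulrC; congr (_ * _).
  by apply: eq_bigr => j' /negbTE ->.
rewrite -(bigA_distr_bigA F) (bigD1 j) //= [X in _ * X]big1 ?mulr1.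
  by rewrite big_bool /F /= eqxx mul1r mul0r addr0.
by move=> j' /negbTE nj; rewrite big_bool /F /= nj var_law_sum.
Qed.

End Bernoulli.

Section Trajectories.
Variables (R : realFieldType) (A0 O0 : finType) (k n : nat).
Variables (q : 'I_k -> 'I_n -> R) (trans : A0 -> O0 -> 'I_k -> R).
Hypotheses (q_valid : valid_q q) (trans_valid : valid_trans trans).

Local Notation round := (rec A0 O0 k n).
Local Notation choice := (A0 * O0 * 'I_k * interv n)%type.
Local Notation policy0 := (seq round -> A0 -> R).
Local Notation policy1 := (seq round -> A0 -> O0 -> 'I_k -> interv n -> R).

Implicit Types (h : seq round) (r : round) (u : choice).

Definition choice_weight (pol0 : policy0) (pol1 : policy1) h (u : choice) : R :=
  pol0 h u.1.1.1 * trans u.1.1.1 u.1.1.2 u.1.2 * pol1 h u.1.1.1 u.1.1.2 u.1.2 u.2.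

Definition round_weight (pol0 : policy0) (pol1 : policy1) h r : R :=
  choice_weight pol0 pol1 h r.1 * bern (q (rec_st r)) (rec_act r) (rec_X r).

Lemma choice_weight_ge0 (pol0 : policy0) (pol1 : policy1) h u :
  valid_pol0 pol0 -> valid_pol1 pol1 -> 0 <= choice_weight pol0 pol1 h u.
Proof.
move=> pol0_valid pol1_valid.
rewrite mulr_ge0 ?(proj1 (pol1_valid _ _ _ _)) // mulr_ge0 ?(proj1 (pol0_valid _)) //.
exact: (proj1 (trans_valid _)).
Qed.

Lemma choice_weight_sum (pol0 : policy0) (pol1 : policy1) h :
  valid_pol0 pol0 -> valid_pol1 pol1 -> \sum_u choice_weight pol0 pol1 h u = 1.
Proof.
move=> pol0_valid pol1_valid.
rewrite !sum_pair -(proj2 (pol0_valid h)); apply: eq_bigr => a0 _.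
rewrite -[RHS]mulr1 -(proj2 (trans_valid a0)) sum_pair mulr_sumr.
apply: eq_bigr => o0 _; rewrite mulr_sumr; apply: eq_bigr => i _.
by rewrite /choice_weight /= -mulr_sumr (proj2 (pol1_valid _ _ _ _)) mulr1.
Qed.

Lemma round_weight_ge0 (pol0 : policy0) (pol1 : policy1) h r :
  valid_pol0 pol0 -> valid_pol1 pol1 -> 0 <= round_weight pol0 pol1 h r.
Proof. by move=> ? ?; rewrite mulr_ge0 ?choice_weight_ge0 ?bern_ge0. Qed.

Lemma round_weight_sum (pol0 : policy0) (pol1 : policy1) h :
  valid_pol0 pol0 -> valid_pol1 pol1 -> \sum_r round_weight pol0 pol1 h r = 1.
Proof.
move=> pol0_valid pol1_valid.
rewrite sum_pair -(choice_weight_sum h pol0_valid pol1_valid); apply: eq_bigr => u _.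
by rewrite /round_weight /rec_st /rec_act /rec_X /= -mulr_sumr bern_sum mulr1.
Qed.

Definition shift (A : Type) r (pol : seq round -> A) : seq round -> A :=
  fun h => pol (r :: h).

Lemma traj_weight_cons (pol0 : policy0) (pol1 : policy1) T r (tr : T.-tuple round) :
  traj_weight pol0 trans pol1 q (cons_tuple r tr) =
  round_weight pol0 pol1 [::] r * traj_weight (shift r pol0) trans (shift r pol1) q tr.
Proof.
rewrite /traj_weight big_ord_recl tnth0; congr (_ * _).
by apply: eq_bigr => t _; rewrite tnthS.
Qed.

Lemma traj_weight_ge0 (pol0 : policy0) (pol1 : policy1) T (tr : T.-tuple round) :
  valid_pol0 pol0 -> valid_pol1 pol1 -> 0 <= traj_weight pol0 trans pol1 q tr.
Proof. by move=> ? ?; apply: prodr_ge0 => t _; apply: round_weight_ge0. Qed.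

Lemma traj_weight_sum T (pol0 : policy0) (pol1 : policy1) :
  valid_pol0 pol0 -> valid_pol1 pol1 ->
  \sum_(tr : T.-tuple round) traj_weight pol0 trans pol1 q tr = 1.
Proof.
elim: T pol0 pol1 => [|T IH] pol0 pol1 pol0_valid pol1_valid.
  rewrite (big_pred1 [tuple]) => [|tr]; first by rewrite /traj_weight big_ord0.
  by apply/esym/eqP; exact: tuple0.
rewrite sum_tuple_cons -(round_weight_sum [::] pol0_valid pol1_valid).
apply: eq_bigr => r _; under eq_bigr do rewrite traj_weight_cons.
by rewrite -mulr_sumr IH ?mulr1 // => h; [apply: pol0_valid | apply: pol1_valid].
Qed.

Lemma expect_ge0 T (pol0 : policy0) (pol1 : policy1) f :
  valid_pol0 pol0 -> valid_pol1 pol1 -> 0 <= expect T pol0 trans pol1 q f.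
Proof. by move=> ? ?; apply: sumr_ge0 => tr _; rewrite mulr_ge0 ?traj_weight_ge0. Qed.

Local Notation expect_count T pol0 pol1 P :=
  (expect T pol0 trans pol1 q (fun tr => count P tr)).

Lemma expect_count_cons T (pol0 : policy0) (pol1 : policy1) (P : pred round) :
  valid_pol0 pol0 -> valid_pol1 pol1 ->
  expect_count T.+1 pol0 pol1 P =
  \sum_r round_weight pol0 pol1 [::] r *
    ((P r)%:R + expect_count T (shift r pol0) (shift r pol1) P).
Proof.
move=> pol0_valid pol1_valid; rewrite /expect sum_tuple_cons; apply: eq_bigr => r _.
pose w (tr : T.-tuple round) := traj_weight (shift r pol0) trans (shift r pol1) q tr.
transitivity (round_weight pol0 pol1 [::] r *
  ((P r)%:R * \sum_(tr : T.-tuple round) w tr +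
   expect_count T (shift r pol0) (shift r pol1) P)).
  rewrite mulr_sumr -big_split mulr_sumr.
  by apply: eq_bigr => tr _ /=; rewrite traj_weight_cons natrD /w; ring.
by rewrite traj_weight_sum ?mulr1 // => h; [apply: pol0_valid | apply: pol1_valid].
Qed.

Lemma expect_count_le T (pol0 : policy0) (pol1 : policy1) (P Q S : pred round) (c : R) :
  valid_pol0 pol0 -> valid_pol1 pol1 ->
  (forall h, \sum_r round_weight pol0 pol1 h r * (P r)%:R <=
             \sum_r round_weight pol0 pol1 h r * ((Q r)%:R + c * (S r)%:R)) ->
  expect_count T pol0 pol1 P <= expect_count T pol0 pol1 Q + c * expect_count T pol0 pol1 S.
Proof.
elim: T pol0 pol1 => [|T IH] pol0 pol1 pol0_valid pol1_valid round_le.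
  by rewrite /expect !big1 ?mulr0 ?addr0 // => tr _; rewrite (tuple0 tr) mulr0.
rewrite !expect_count_cons //.
set w := round_weight pol0 pol1 [::].
rewrite mulr_sumr -big_split [X in _ <= X](eq_bigr (fun r =>
    w r * ((Q r)%:R + c * (S r)%:R) +
    w r * (expect_count T (shift r pol0) (shift r pol1) Q +
           c * expect_count T (shift r pol0) (shift r pol1) S))) => [|r _ /=];
  last by ring.
rewrite [X in _ <= X]big_split /=.
under eq_bigr do rewrite mulrDr.
rewrite big_split lerD ?round_le // ler_sum // => r _.
rewrite ler_wpM2l ?round_weight_ge0 ?IH // => h;
  [apply: pol0_valid | apply: pol1_valid | apply: round_le].
Qed.

Lemma round_observed1_le (pol0 : policy0) (pol1 : policy1) h (i : 'I_k) (j : 'I_n) :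
  valid_pol0 pol0 -> valid_pol1 pol1 ->
  \sum_r round_weight pol0 pol1 h r * ((rec_st r == i) && rec_X r j)%:R <=
  \sum_r round_weight pol0 pol1 h r *
    (((rec_st r == i) && (rec_act r == Some (j, true)))%:R + q i j * (rec_st r == i)%:R).
Proof.
move=> pol0_valid pol1_valid; rewrite [leLHS]sum_pair [leRHS]sum_pair; apply: ler_sum => u _.
rewrite /round_weight /rec_st /rec_act /rec_X /=.
under eq_bigr do rewrite -mulrA.
under [X in _ <= X]eq_bigr do rewrite -mulrA.
rewrite -!mulr_sumr ler_wpM2l ?choice_weight_ge0 //.
case: (eqVneq u.1.2 i) => [->|_] /=; last first.
  by rewrite !big1 // => X _; rewrite mulr0 ?add0r ?mulr0.
rewrite bern_marginal -mulr_suml bern_sum mul1r mulr1.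
by apply: var_law_true_le; case/andP: (q_valid i j).
Qed.

Lemma expect_observed1_le T (pol0 : policy0) (pol1 : policy1) (i : 'I_k) (j : 'I_n) :
  valid_pol0 pol0 -> valid_pol1 pol1 ->
  expect T pol0 trans pol1 q (observed1 i j) <=
  expect T pol0 trans pol1 q (performs i (Some (j, true))) +
  q i j * expect T pol0 trans pol1 q (visits i).
Proof.
by move=> pol0_valid pol1_valid; apply: expect_count_le => // h; apply: round_observed1_le.
Qed.

End Trajectories.

Lemma le_inv_m_of (R : realFieldType) n (qi : 'I_n -> R) (s : {perm 'I_n}) (j : 'I_n) :
  sorted_by qi s -> qi (s j) < j.+1%:R^-1 -> qi (s j) <= (m_of qi s)%:R^-1.
Proof.
move=> qi_sorted qj_lt; rewrite /m_of (bigop.bigmax_eq_arg j qj_lt).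
case: (@arg_maxnP _ j (fun j => qi (s j) < j.+1%:R^-1) (fun j => j.+1) qj_lt)
  => jm qjm_lt jm_max.
apply/ltW/(le_lt_trans _ qjm_lt)/qi_sorted.
by rewrite -ltnS; apply: jm_max.
Qed.

Unset Implicit Arguments.

Theorem proposition2 (R : realFieldType) (A0 O0 : finType) (k n T : nat)
  (q : 'I_k -> 'I_n -> R) (trans : A0 -> O0 -> 'I_k -> R)
  (pol0 : seq (rec A0 O0 k n) -> A0 -> R)
  (pol1 : seq (rec A0 O0 k n) -> A0 -> O0 -> 'I_k -> interv n -> R)
  (i : 'I_k) (s : {perm 'I_n}) :
  valid_q q -> valid_trans trans -> valid_pol0 pol0 -> valid_pol1 pol1 ->
  sorted_by (q i) s -> (1 <= m_of (q i) s)%N ->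
  forall j : 'I_n,
    in_Im (q i) s (Some (j, true)) ->
    expect T pol0 trans pol1 q (performs i (Some (j, true))) <=
      2 * expect T pol0 trans pol1 q (visits i) / (m_of (q i) s)%:R ->
    expect T pol0 trans pol1 q (observed1 i j) <=
      3 * expect T pol0 trans pol1 q (visits i) / (m_of (q i) s)%:R.
Proof.
move=> q_valid trans_valid pol0_valid pol1_valid q_sorted m_ge1 _ [l [[->] ql_lt]].
set V := expect T pol0 trans pol1 q (visits i); set m := (m_of (q i) s)%:R.
move=> performs_le.
have V_ge0 : 0 <= V by apply: expect_ge0.
have m_gt0 : 0 < m by rewrite ltr0n.
have qV_le : q i (s l) * V <= V / m by rewrite mulrC ler_wpM2l ?le_inv_m_of.
have observed_le :=
  expect_observed1_le q_valid trans_valid T i (s l) pol0_valid pol1_valid.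
rewrite (le_trans observed_le) //.
have -> : 3 * V / m = 2 * V / m + V / m by ring.
exact: lerD.
Qed.
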